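(* Let $k\ge 2$ and $m\ge 3$ be integers. Then $$\frac{(m-1)^k}{2}+\frac{m-1}{2}+1\;\le\; M_k(m)\;\le\;(m-1)^k+1.$$ More generally, for all positive integers $m_1,\ldots,m_k$, $$M(m_1,\ldots,m_k)\le \prod_{i=1}^{k}(m_i-1)+1.$$
   Context: All graphs are finite and simple. A path $v_1,v_2,\ldots,v_r$ in a graph $G$ is degree-monotone if $\deg_G(v_1)\le \deg_G(v_2)\le\cdots\le\deg_G(v_r)$, where $\deg_G$ denotes degree in $G$; its order is its number of vertices $r$. Let $mp(G)$ be the maximum order of a degree-monotone path in $G$. For a $k$-edge-coloring of $K_n$ with colors $1,\ldots,k$, let $G_j$ be the spanning subgraph of $K_n$ whose edges are those colored $j$ (degrees are taken in $G_j$). $M(m_1,\ldots,m_k)$ is the minimum integer $M$ such that for every $n\ge M$ and every $k$-edge-coloring of $K_n$ there is some $j\in\{1,\ldots,k\}$ with $mp(G_j)\ge m_j$. $M_k(m)$ denotes $M(m,m,\ldots,m)$ ($k$ entries). *)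

From mathcomp Require Import all_boot.
Set Implicit Arguments. Unset Strict Implicit. Unset Printing Implicit Defensive.

(* A k-edge-coloring of K_n on vertex set 'I_n is a function
   c : 'I_n -> 'I_n -> 'I_k that is symmetric on distinct pairs
   (the value c x x is irrelevant). *)

Definition is_coloring (n k : nat) (c : 'I_n -> 'I_n -> 'I_k) : Prop :=
  forall x y : 'I_n, x != y -> c x y = c y x.

Definition adjc (n k : nat) (c : 'I_n -> 'I_n -> 'I_k) (j : 'I_k) : rel 'I_n :=
  fun x y => (x != y) && (c x y == j).

Definition degc (n k : nat) (c : 'I_n -> 'I_n -> 'I_k) (j : 'I_k) (x : 'I_n) : nat :=
  #|[set y | adjc c j x y]|.

Definition dm_path (n k : nat) (c : 'I_n -> 'I_n -> 'I_k) (j : 'I_k) (p : seq 'I_n) : bool :=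
  [&& uniq p, sorted (adjc c j) p & sorted (fun x y => degc c j x <= degc c j y) p].

Definition mp_ge (n k : nat) (c : 'I_n -> 'I_n -> 'I_k) (j : 'I_k) (m : nat) : Prop :=
  exists p : seq 'I_n, dm_path c j p /\ m <= size p.

Definition goodM (k : nat) (ms : 'I_k -> nat) (M : nat) : Prop :=
  forall n : nat, M <= n ->
  forall c : 'I_n -> 'I_n -> 'I_k, is_coloring c -> exists j : 'I_k, mp_ge c j (ms j).

Definition isM (k : nat) (ms : 'I_k -> nat) (M : nat) : Prop :=
  goodM ms M /\ forall M' : nat, goodM ms M' -> M <= M'.

From mathcomp Require Import all_boot zify.
From Stdlib Require Import Classical.
Set Implicit Arguments. Unset Strict Implicit. Unset Printing Implicit Defensive.

(* Upper bound: order the vertices by degree in G_j, ties broken by index, and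
   let depth_j v be the number of vertices before v on a longest increasing
   G_j-path ending at v.  The endpoints of an edge of colour j have different
   depth_j, so v |-> (depth_j v)_j is injective into the product of the
   intervals [0, m_j - 2].
   Lower bound: take distinct words of length k over an alphabet of size
   d = m - 1 and colour a pair by the length of its longest common prefix.
   In the colour of prefix length t, the degree of a word is the number of
   words sharing its first t letters minus the number sharing its first t + 1
   letters.  If sibling branches of the prefix tree always have distinct sizes,
   a degree-monotone path meets branches of strictly decreasing size, hence at
   most d of them.  A level whose branches have at most L words allows d
   siblings of sizes L, L - 1, ..., L - d + 1, which yields a family of
   ((m - 1)^k + (m - 1)) / 2 words. *)

Lemma isM_exists_le k (ms : 'I_k -> nat) N :
  goodM ms N -> exists M, isM ms M /\ M <= N.
Proof.
elim: N => [|N IHN] goodN; first by exists 0; split=> //; split=> // M' _.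
have [goodN'|not_goodN'] := classic (goodM ms N).
  by have [M [isMM leMN]] := IHN goodN'; exists M; split=> //; apply: leqW.
exists N.+1; split=> //; split=> // M' goodM'; rewrite ltnNge; apply/negP => leM'N.
by apply: not_goodN' => n leNn; apply: goodM' (leq_trans leM'N leNn).
Qed.

Section LongestChains.

Variables (n k : nat) (c : 'I_n -> 'I_n -> 'I_k) (ms : 'I_k -> nat).
Hypothesis c_sym : is_coloring c.
Hypothesis short_paths : forall j p, dm_path c j p -> size p < ms j.

Definition rank (j : 'I_k) (x : 'I_n) : nat := degc c j x * n + x.

Lemma rank_inj j : injective (rank j).
Proof.
move=> x y /(congr1 (modn^~ n)); rewrite !modnMDl !modn_small ?ltn_ord //.
exact: val_inj.
Qed.

Lemma rank_lt_degc j x y : rank j x < rank j y -> degc c j x <= degc c j y.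
Proof.
rewrite /rank => lt_xy; rewrite leqNgt; apply/negP => lt_yx.
have := ltn_ord y; have := leq_mul lt_yx (leqnn n); nia.
Qed.

Definition chain (j : 'I_k) (s : seq 'I_n) : bool :=
  sorted (adjc c j) s && sorted (relpre (rank j) ltn) s.

Lemma chain_dm_path j s : chain j s -> dm_path c j s.
Proof.
case/andP=> adj_s rank_s; have: sorted ltn (map (rank j) s) by rewrite sorted_map.
rewrite ltn_sorted_uniq_leq => /andP[uniq_rank _].
rewrite /dm_path (map_uniq uniq_rank) adj_s /=.
by apply: sub_sorted rank_s => x y /rank_lt_degc.
Qed.

Lemma chain_rcons j s u v :
  chain j (rcons s u) -> adjc c j u v -> rank j u < rank j v ->
  chain j (rcons (rcons s u) v).
Proof.
have snoc e : sorted e (rcons s u) -> e u v -> sorted e (rcons (rcons s u) v).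
  move=> sorted_su e_uv.
  by rewrite -[rcons (rcons s u) v]cats1 -cats1 -catA sorted_cat_cons sorted_su /= e_uv.
by case/andP=> adj_s rank_s adj_uv lt_uv; rewrite /chain !snoc.
Qed.

Definition ends_chain j (v : 'I_n) (l : nat) : bool :=
  [exists t : l.-tuple 'I_n, chain j (rcons t v)].

Lemma ends_chain0 j v : ends_chain j v 0.
Proof. by apply/existsP; exists [tuple]. Qed.

Lemma ends_chain_lt j v l : ends_chain j v l -> l.+1 < ms j.
Proof.
by case/existsP=> t /chain_dm_path /short_paths; rewrite size_rcons size_tuple.
Qed.

Definition depth j (v : 'I_n) : nat :=
  ex_maxn (ex_intro _ 0 (ends_chain0 j v))
          (fun l ends_l => ltnW (ltnW (ends_chain_lt ends_l))).

Lemma ends_chain_depth j v : ends_chain j v (depth j v).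
Proof. by rewrite /depth; case: ex_maxnP. Qed.

Lemma depth_lt j v : depth j v < (ms j).-1.
Proof. by have := ends_chain_lt (ends_chain_depth j v); case: (ms j). Qed.

Lemma depth_increasing j u v :
  adjc c j u v -> rank j u < rank j v -> depth j u < depth j v.
Proof.
move=> adj_uv lt_uv; have /existsP[t chain_t] := ends_chain_depth j u.
have ends_v : ends_chain j v (depth j u).+1.
  have size_ut : size (rcons t u) == (depth j u).+1 by rewrite size_rcons size_tuple.
  by apply/existsP; exists (Tuple size_ut); apply: chain_rcons.
by rewrite {2}/depth; case: ex_maxnP => l _; apply.
Qed.

Definition depth_profile (v : 'I_n) : {dffun forall j : 'I_k, 'I_(ms j).-1} :=
  [ffun j => Ordinal (depth_lt j v)].

Lemma depth_profile_inj : injective depth_profile.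
Proof.
move=> u v eq_uv; apply/eqP/negP => /negP neq_uv; pose j := c u v.
have eq_depth : depth j u = depth j v.
  have := congr1 (fun d : {dffun forall j : 'I_k, 'I_(ms j).-1} => val (d j)) eq_uv.
  by rewrite /= !ffunE.
have adj_uv : adjc c j u v by rewrite /adjc neq_uv eqxx.
have adj_vu : adjc c j v u by rewrite /adjc eq_sym neq_uv -(c_sym neq_uv) eqxx.
case: (ltngtP (rank j u) (rank j v)) => [lt_uv|lt_vu|eq_rank].
- by have := depth_increasing adj_uv lt_uv; rewrite eq_depth ltnn.
- by have := depth_increasing adj_vu lt_vu; rewrite eq_depth ltnn.
- by rewrite (rank_inj eq_rank) eqxx in neq_uv.
Qed.

Lemma vertices_le_prod : n <= \prod_(j < k) (ms j - 1).
Proof.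
have := leq_card _ depth_profile_inj; rewrite card_ord card_dep_ffun foldrE big_map.
by rewrite big_enum /=; under eq_bigr do rewrite card_ord -subn1.
Qed.

End LongestChains.

Lemma goodM_prod k (ms : 'I_k -> nat) : goodM ms (\prod_(j < k) (ms j - 1) + 1).
Proof.
move=> n le_n c c_sym; apply: NNPP => no_path.
have short_paths j p : dm_path c j p -> size p < ms j.
  by move=> dm_p; rewrite ltnNge; apply/negP => le_p; apply: no_path; exists j, p.
by have := vertices_le_prod c_sym short_paths; rewrite leqNgt -addn1 le_n.
Qed.

Definition prefix_count (S : seq (seq nat)) (t : nat) (p : seq nat) : nat :=
  count (fun a => take t a == p) S.

Definition distinct_branch_sizes (S : seq (seq nat)) : Prop :=
  forall a b, a \in S -> b \in S -> forall t, t.+2 <= size a ->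
  take t a = take t b -> nth 0 a t != nth 0 b t ->
  prefix_count S t.+1 (take t.+1 a) != prefix_count S t.+1 (take t.+1 b).

Definition word_family (d j : nat) (S : seq (seq nat)) : Prop :=
  [/\ uniq S, {in S, forall a, size a = j},
      {in S, forall a, all (fun e => e < d) a} & distinct_branch_sizes S].

Lemma prefix_count_cat S1 S2 t p :
  prefix_count (S1 ++ S2) t p = prefix_count S1 t p + prefix_count S2 t p.
Proof. exact: count_cat. Qed.

Lemma prefix_count_cons q C t x p :
  prefix_count (map (cons q) C) t.+1 (x :: p) = (x == q) * prefix_count C t p.
Proof.
rewrite /prefix_count count_map; have [->|neq_xq] := eqVneq x q.
  by rewrite mul1n; apply: eq_count => a /=; rewrite eqseq_cons eqxx.
rewrite mul0n; apply/eqP; rewrite eqn0Ngt -has_count; apply/hasPn => a _ /=.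
by rewrite eqseq_cons eq_sym (negbTE neq_xq).
Qed.

Lemma prefix_count0 S : prefix_count S 0 [::] = size S.
Proof. by rewrite -count_predT; apply: eq_count => a; rewrite take0. Qed.

Lemma prefix_count_gt0 S t a : a \in S -> 0 < prefix_count S t (take t a).
Proof. by move=> a_S; rewrite -has_count; apply/hasP; exists a. Qed.

Lemma prefix_count_leS S t a :
  prefix_count S t.+1 (take t.+1 a) <= prefix_count S t (take t a).
Proof.
apply: sub_count => w /eqP eq_w /=.
by rewrite -(take_takel w (leqnSn t)) eq_w take_takel.
Qed.

Lemma prefix_count_head_gt S q t p :
  {in S, forall a, head 0 a < q} -> prefix_count S t.+1 (q :: p) = 0.
Proof.
move=> head_lt; apply/eqP; rewrite eqn0Ngt -has_count; apply/hasPn.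
move=> [|x a] //= /head_lt /= lt_xq.
by rewrite eqseq_cons (ltn_eqF lt_xq).
Qed.

Lemma mem_graft (S C : seq (seq nat)) q a : a \in S ++ map (cons q) C ->
  a \in S \/ exists2 a', a = q :: a' & a' \in C.
Proof. by rewrite mem_cat => /orP[->|/mapP[a' ? ->]]; [left|right; exists a']. Qed.

Section Grafting.

Variables (j q : nat) (S C : seq (seq nat)).
Hypothesis size_S : {in S, forall a, size a = j.+1}.
Hypothesis head_S : {in S, forall a, head 0 a < q}.
Hypothesis branches_S : distinct_branch_sizes S.
Hypothesis branches_C : distinct_branch_sizes C.
Hypothesis size_C_fresh : {in S, forall a, prefix_count S 1 (take 1 a) != size C}.

Let T := S ++ map (cons q) C.

Lemma prefix_count_graft_old t a : a \in S ->
  prefix_count T t.+1 (take t.+1 a) = prefix_count S t.+1 (take t.+1 a).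
Proof.
move=> a_S; have := head_S a_S; have := size_S a_S.
case: a a_S => [|x a] //= _ _ lt_xq.
by rewrite prefix_count_cat prefix_count_cons (ltn_eqF lt_xq) mul0n addn0.
Qed.

Lemma prefix_count_graft_new t a :
  prefix_count T t.+1 (take t.+1 (q :: a)) = prefix_count C t (take t a).
Proof.
by rewrite /= prefix_count_cat prefix_count_cons eqxx mul1n prefix_count_head_gt.
Qed.

Lemma prefix_count_graft_mixed a b t : a \in S -> take t a = take t (q :: b) ->
  prefix_count T t.+1 (take t.+1 a) != prefix_count T t.+1 (take t.+1 (q :: b)).
Proof.
case: t => [|t] a_S eq_take.
  rewrite prefix_count_graft_old // prefix_count_graft_new take0 prefix_count0.
  exact: size_C_fresh.
have := head_S a_S; have := size_S a_S.
by case: a a_S eq_take => [|x a] //= _ [-> _] _; rewrite ltnn.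
Qed.

Lemma distinct_branch_sizes_graft : distinct_branch_sizes T.
Proof.
move=> a b /mem_graft[a_S|[a' -> a'_C]] /mem_graft[b_S|[b' -> b'_C]]
  t le_t eq_take neq_nth.
- by rewrite !prefix_count_graft_old //; apply: branches_S.
- exact: prefix_count_graft_mixed.
- by rewrite eq_sym; apply: prefix_count_graft_mixed (esym eq_take).
- case: t le_t eq_take neq_nth => [|t] le_t eq_take neq_nth.
    by rewrite eqxx in neq_nth.
  by rewrite !prefix_count_graft_new; apply: branches_C => //; case: eq_take.
Qed.

End Grafting.

Lemma word_family_graft d j q S C :
  word_family d j.+1 S -> {in S, forall a, head 0 a < q} -> q < d ->
  word_family d j C -> {in S, forall a, prefix_count S 1 (take 1 a) != size C} ->
  word_family d j.+1 (S ++ map (cons q) C).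
Proof.
move=> [uniq_S size_S letters_S branches_S] head_S lt_qd.
move=> [uniq_C size_C letters_C branches_C] fresh.
split; last exact: distinct_branch_sizes_graft size_S head_S branches_S branches_C fresh.
- have cons_q_inj : injective (cons q) by move=> a b [].
  rewrite cat_uniq uniq_S (map_inj_uniq cons_q_inj) uniq_C andbT /=.
  by apply/hasPn => _ /mapP[a _ ->]; apply/negP => /head_S /=; rewrite ltnn.
- by move=> a /mem_graft[/size_S|[a' -> /size_C /= ->]].
- by move=> a /mem_graft[/letters_S|[a' -> /letters_C letters_a']] //=; rewrite lt_qd.
Qed.

Fixpoint sum_desc (B q : nat) : nat := if q is q'.+1 then B + sum_desc B.-1 q' else 0.

Section Branching.

Variables (d j L : nat).
Hypothesis families : forall r, r <= L -> exists2 C, word_family d j C & size C = r.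

Lemma graft_families q B s : q <= d -> B <= L -> s <= sum_desc B q ->
  exists S, [/\ word_family d j.+1 S, {in S, forall a, head 0 a < q},
                forall i, prefix_count S 1 [:: i] <= B & size S = s].
Proof.
elim: q B s => [|q IHq] B s /= le_qd le_BL.
  rewrite leqn0 => /eqP ->; exists [::]; split=> //; split=> // a b.
set r := minn s B => le_s.
have [|||S [family_S head_S count_S size_S]] := IHq B.-1 (s - r).
- exact: ltnW.
- exact: leq_trans (leq_pred B) le_BL.
- by move: le_s; rewrite /r; lia.
have [C family_C size_C] := families (leq_trans (geq_minr s B) le_BL).
have [_ word_size _ _] := family_S.
have nonempty a : a \in S -> 0 < size a by move=> /word_size ->.
have take1 a : a \in S -> take 1 a = [:: head 0 a].
  by move=> /nonempty; case: a => //= x a _; rewrite take0.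
exists (S ++ map (cons q) C); split.
- (* The new branch has min(s, B) words; when the old ones exist, this is B. *)
  apply: word_family_graft => // a a_S; rewrite size_C.
  have := prefix_count_gt0 1 a_S; have := count_S (head 0 a); rewrite -take1 //.
  have : 0 < size S by rewrite lt0n size_eq0; apply: contraTneq a_S => ->.
  rewrite size_S /r; move: (prefix_count _ _ _) => x; lia.
- by move=> a; rewrite mem_cat => /orP[/head_S /ltnW|/mapP[a' _ ->]].
- move=> i; rewrite prefix_count_cat prefix_count_cons; have [->|_] := eqVneq i q.
    by rewrite prefix_count_head_gt // mul1n prefix_count0 size_C geq_minr.
  by rewrite mul0n addn0 (leq_trans (count_S i)) ?leq_pred.
- by rewrite size_cat size_map size_S size_C subnK // geq_minl.
Qed.

End Branching.

Fixpoint tree_size (d j : nat) : nat :=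
  if j is j'.+1 then sum_desc (tree_size d j') d else d.

Lemma tree_families d j s :
  s <= tree_size d j -> exists2 S, word_family d j.+1 S & size S = s.
Proof.
elim: j s => [|j IHj] s /= le_s.
  exists [seq [:: i] | i <- iota 0 s]; last by rewrite size_map size_iota.
  split=> [||a /mapP[i]|a b /mapP[i _ ->] //].
  - have singleton_inj : injective (fun i : nat => [:: i]) by move=> x y [].
    by rewrite (map_inj_uniq singleton_inj) iota_uniq.
  - by move=> a /mapP[i _ ->].
  - by rewrite mem_iota => /andP[_ lt_is] ->; rewrite /= andbT (leq_trans lt_is).
by have [S [? _ _ ?]] := graft_families IHj (leqnn d) (leqnn _) le_s; exists S.
Qed.

Lemma sum_desc_double B q : q <= B.+1 -> 2 * sum_desc B q + q * q.-1 = 2 * q * B.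
Proof.
elim: q B => [|q IHq] [|B] //= le_qB; first by case: q {IHq} le_qB.
by have := IHq B le_qB; case: q {IHq le_qB} => [|q] /=; nia.
Qed.

Lemma leq_sum_desc B q : 0 < q -> B <= sum_desc B q.
Proof. by case: q => //= q _; rewrite leq_addr. Qed.

Lemma tree_size_double d j : 0 < d -> 2 * tree_size d j = d ^ j.+1 + d.
Proof.
move=> d_gt0; have ge_d i : d <= tree_size d i.
  by elim: i => //= i IHi; apply: leq_trans IHi (leq_sum_desc _ d_gt0).
elim: j => [|j IHj] /=; first by rewrite expn1 addnn -mul2n.
have := sum_desc_double (leq_trans (ge_d j) (leqnSn _)); rewrite expnS.
move: IHj; move: (tree_size d j) (sum_desc _ _) (d ^ j.+1) => L F P; nia.
Qed.

Lemma path_fun_const (T : eqType) (U : Type) (e : rel T) (f : T -> U) x p :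
  (forall y z, e y z -> f y = f z) -> path e x p -> {in x :: p, forall y, f y = f x}.
Proof.
move=> f_e; elim: p x => [|z p IHp] x /=; first by move=> _ y; rewrite inE => /eqP ->.
case/andP=> e_xz path_zp y; rewrite inE => /predU1P[-> //|y_p].
by rewrite (IHp z path_zp y) ?inE ?y_p ?orbT ?(f_e _ _ e_xz).
Qed.

Fixpoint lcp (a b : seq nat) : nat :=
  if (a, b) is (x :: a', y :: b') then (if x == y then (lcp a' b').+1 else 0) else 0.

Lemma lcpC a b : lcp a b = lcp b a.
Proof. by elim: a b => [|x a IHa] [|y b] //=; rewrite eq_sym IHa. Qed.

Lemma lcp_eq a b t : size a = size b -> t < size a ->
  (lcp a b == t) = (take t a == take t b) && (take t.+1 a != take t.+1 b).
Proof.
elim: a b t => [|x a IHa] [|y b] [|t] //= [eq_size]; rewrite ?take0 !eqseq_cons.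
  by case: (x == y).
by rewrite ltnS => lt_t; case: (x == y) => //=; rewrite eqSS IHa.
Qed.

Lemma lcp_lt a b : size a = size b -> a != b -> lcp a b < size a.
Proof.
elim: a b => [|x a IHa] [|y b] //= [eq_size]; rewrite eqseq_cons.
by case: (x == y) => //= /(IHa _ eq_size).
Qed.

Section LcpColoring.

Variables (d k : nat) (S : seq (seq nat)).
Hypothesis family_S : word_family d k.+1 S.

Definition word (x : 'I_(size S)) : seq nat := nth [::] S x.

Definition lcp_color (x y : 'I_(size S)) : 'I_k.+1 := inord (k - lcp (word x) (word y)).

Lemma word_in x : word x \in S.
Proof. exact: mem_nth. Qed.

Lemma size_word x : size (word x) = k.+1.
Proof. by case: family_S => _ size_S _ _; apply: size_S (word_in x). Qed.

Lemma word_inj : injective word.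
Proof.
case: family_S => uniq_S _ _ _ x y /eqP.
by rewrite /word nth_uniq // => /eqP /val_inj.
Qed.

Lemma lcp_color_sym : is_coloring lcp_color.
Proof. by move=> x y _; rewrite /lcp_color lcpC. Qed.

Lemma adjc_lcp_color (j : 'I_k.+1) x y : let t := k - j in
  adjc lcp_color j x y =
  (take t (word x) == take t (word y)) && (take t.+1 (word x) != take t.+1 (word y)).
Proof.
move=> t; rewrite /adjc; have [->|neq_xy] := eqVneq x y; first by rewrite !eqxx.
have eq_size : size (word x) = size (word y) by rewrite !size_word.
have := lcp_lt eq_size (contra_neq (@word_inj x y) neq_xy); rewrite size_word ltnS.
move=> le_lcp; rewrite -lcp_eq ?size_word ?ltnS ?leq_subr //=.
apply/eqP/eqP => [/(congr1 val)|eq_lcp].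
  by rewrite /= inordK ?ltnS ?leq_subr // /t; lia.
by apply: val_inj; rewrite /= inordK ?ltnS ?leq_subr // eq_lcp /t; have := ltn_ord j; lia.
Qed.

Lemma card_word_pred (P : pred (seq nat)) : #|[set x | P (word x)]| = count P S.
Proof.
rewrite cardsE cardE /enum_mem size_filter -[in RHS](mkseq_nth [::] S).
by rewrite /mkseq -val_enum_ord -map_comp count_map enumT.
Qed.

Lemma degc_lcp_color (j : 'I_k.+1) y : let t := k - j in
  degc lcp_color j y =
  prefix_count S t (take t (word y)) - prefix_count S t.+1 (take t.+1 (word y)).
Proof.
move=> t; pose block i := [set w | take i (word w) == take i (word y)].
have card_block i : #|block i| = prefix_count S i (take i (word y)).
  exact: card_word_pred.
have sub_block : block t.+1 \subset block t.
  apply/subsetP => w; rewrite !inE => /eqP eq_w.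
  by rewrite -(take_takel (word w) (leqnSn t)) eq_w take_takel.
rewrite /degc (_ : [set w | _] = block t :\: block t.+1); last first.
  by apply/setP => w; rewrite !inE adjc_lcp_color andbC !(eq_sym (take _ (word y))).
by rewrite cardsD (setIidPr sub_block) !card_block.
Qed.

Lemma branch_count_decreasing (j : 'I_k.+1) y z : let t := k - j in 0 < j ->
  adjc lcp_color j y z -> degc lcp_color j y <= degc lcp_color j z ->
  prefix_count S t.+1 (take t.+1 (word z)) < prefix_count S t.+1 (take t.+1 (word y)).
Proof.
move=> t j_gt0; rewrite adjc_lcp_color !degc_lcp_color -/t => /andP[/eqP eq_t neq_t1].
have [_ _ _ branches_S] := family_S.
have lt_t : t < k.+1 by rewrite ltnS leq_subr.
have neq_count : prefix_count S t.+1 (take t.+1 (word y)) !=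
                 prefix_count S t.+1 (take t.+1 (word z)).
  apply: branches_S; rewrite ?word_in ?size_word //.
    by rewrite /t; have := ltn_ord j; lia.
  apply: contra neq_t1 => /eqP eq_nth.
  by rewrite !(take_nth 0) ?size_word // eq_t eq_nth.
move: neq_count (prefix_count_leS S t (word y)) (prefix_count_leS S t (word z)).
by rewrite eq_t; lia.
Qed.

Lemma dm_path_lcp_color (j : 'I_k.+1) p : dm_path lcp_color j p -> size p <= d.
Proof.
case/and3P=> uniq_p adj_p deg_p; set t := k - j.
case: p uniq_p adj_p deg_p => [|y0 p] // uniq_p adj_p deg_p.
have [_ _ letters_S _] := family_S.
pose P := take t (word y0).
have prefix_p : {in y0 :: p, forall y, take t (word y) = P}.
  by apply: path_fun_const adj_p => y z; rewrite adjc_lcp_color => /andP[/eqP].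
pose g y := nth 0 (word y) t.
have lt_t : t < k.+1 by rewrite ltnS leq_subr.
have g_lt y : g y < d.
  by apply: (allP (letters_S _ (word_in y))); rewrite mem_nth ?size_word.
have take_g y : take t.+1 (word y) = rcons (take t (word y)) (g y).
  by rewrite (take_nth 0) ?size_word.
suff uniq_g : uniq (map g (y0 :: p)).
  rewrite -(size_map g) -(size_iota 0 d); apply: uniq_leq_size uniq_g _.
  by move=> _ /mapP[y _ ->]; rewrite mem_iota add0n g_lt.
have [j0|j_gt0] := posnP j.
  have t_k : t = k by rewrite /t j0 subn0.
  (* In colour 0 the words along p differ only in their last letter. *)
  rewrite map_inj_in_uniq // => y z y_p z_p eq_g; apply: word_inj.
  rewrite -(take_size (word y)) -(take_size (word z)) !size_word -t_k.
  by rewrite !take_g !prefix_p // eq_g.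
pose h y := prefix_count S t.+1 (take t.+1 (word y)).
pose H i := prefix_count S t.+1 (rcons P i).
apply: (@map_uniq _ _ H); rewrite -map_comp.
have -> : map (H \o g) (y0 :: p) = map h (y0 :: p).
  by apply/eq_in_map => y y_p; rewrite /h /= take_g prefix_p.
have: sorted (relpre h gtn) (y0 :: p).
  have := introT andP (conj adj_p deg_p); rewrite -sorted_relI.
  by apply: sub_sorted => y z /andP[]; apply: branch_count_decreasing.
by rewrite -sorted_map gtn_sorted_uniq_geq => /andP[].
Qed.

End LcpColoring.

Theorem theorem1p2 :
  (forall k m : nat, 2 <= k -> 3 <= m ->
     exists M : nat, isM (fun _ : 'I_k => m) M /\
       (m - 1) ^ k + (m - 1) + 2 <= 2 * M /\ M <= (m - 1) ^ k + 1) /\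
  (forall (k : nat) (ms : 'I_k -> nat), (forall j, 0 < ms j) ->
     exists M : nat, isM ms M /\ M <= \prod_(j < k) (ms j - 1) + 1).
Proof.
split=> [k m le2k le3m|k ms _]; last exact: isM_exists_le (goodM_prod (ms := ms)).
have [M [isM_M le_M]] := isM_exists_le (goodM_prod (ms := fun _ : 'I_k => m)).
exists M; split=> //; rewrite prod_nat_const card_ord in le_M; split=> //.
case: k le2k isM_M {le_M} => [|k] // _ [goodM_M _].
have [S family_S size_S] := tree_families (leqnn (tree_size m.-1 k)).
have lt_SM : size S < M.
  rewrite ltnNge; apply/negP => le_MS.
  have [j [p [dm_p le_mp]]] := goodM_M _ le_MS _ (@lcp_color_sym k S).
  by have := dm_path_lcp_color family_S dm_p; lia.
have d_gt0 : 0 < m.-1 by lia.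
by have := tree_size_double k d_gt0; rewrite -size_S; lia.
Qed.
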